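(* Let $D$ be a finite offline dataset of transitions $(s,a,r,s')$ from an MDP $\langle \mathcal{S},\mathcal{A},\mathcal{R},\mathcal{P},\gamma\rangle$ with no terminal states, and let $\pi$ be a deterministic policy. Let $\mathcal{X}$, $R$, $\mathcal{X}'$ be the data matrices whose $k$-th rows are, respectively, $(s,a)$, $r$ and $(s',\pi(s'))$ for the $k$-th transition of $D$. Consider an ensemble of $Q$-networks $Q_{\theta^i}$ (indexed by $i$ ranging over a probability space $Z$), all having the same infinite-width, NTK-parameterized architecture and differing only in their initial weights $\theta^i$, which are drawn independently from the initial weight distribution; $\mathbb{E}$ and $\mathbb{V}$ denote expectation and variance over this draw. Let $\hat{\Theta}^{(0)}(A,B)=\nabla_\theta Q_{\theta^i}(A)\,\nabla_\theta Q_{\theta^i}(B)^T|_{t=0}$ be the (deterministic, member-independent) neural tangent kernel at initialization, and set $C := \hat{\Theta}^{(0)}(\mathcal{X}',\mathcal{X})\,\hat{\Theta}^{(0)}(\mathcal{X},\mathcal{X})^{-1}$. Write $Q^{(0)}_{\theta^i}$ for the network at initialization and $Q^{(t)}_{\theta^i}$ for the network after $t$ iterations of the following pessimistic policy evaluation procedure: at iteration $t+1$, targets $y^i$ are computed from the iteration-$t$ networks, and each network $Q_{\theta^i}$ is trained from its initialization by gradient descent (with a suitably small learning rate) to convergence on the mean squared error $\frac{1}{|D|}\sum_{(s,a,r,s')\in D}(Q_{\theta^i}(s,a)-y^i(r,s',\pi))^2$. Two choices of targets are considered: (Method 1, independent targets) $y^i = r + \gamma\, Q^{(t)}_{\theta^i}(s',\pi(s'))$;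 (Method 2, shared targets) $y^i = r + \gamma\big(\mathbb{E}[Q^{(t)}_{\theta^i}(s',\pi(s'))] - \sqrt{\mathbb{V}[Q^{(t)}_{\theta^i}(s',\pi(s'))]}\big)$, the same for all $i$. In both cases define $Q^{(t)}_{\mathrm{LCB}}(s,a) = \mathbb{E}[Q^{(t)}_{\theta^i}(s,a)] - \sqrt{\mathbb{V}[Q^{(t)}_{\theta^i}(s,a)]}$. Then, after $t+1$ iterations, with $1$ denoting the identity matrix and squares and square roots taken element-wise: for Method 1, $$Q^{(t+1)}_{\mathrm{LCB}}(\mathcal{X}') = \mathcal{O}(\gamma^t\|C\|^t) + (1+\gamma C+\dots+\gamma^t C^t)\,C R - \sqrt{\mathbb{E}\Big[\Big((1+\gamma C+\dots+\gamma^t C^t)\big(Q^{(0)}_{\theta^i}(\mathcal{X}') - C\,Q^{(0)}_{\theta^i}(\mathcal{X})\big)\Big)^2\Big]};$$ for Method 2, $$Q^{(t+1)}_{\mathrm{LCB}}(\mathcal{X}') = \mathcal{O}(\gamma^t\|C\|^t) + (1+\gamma C+\dots+\gamma^t C^t)\,C R - (1+\gamma C+\dots+\gamma^t C^t)\sqrt{\mathbb{E}\Big[\big(Q^{(0)}_{\theta^i}(\mathcal{X}') - C\,Q^{(0)}_{\theta^i}(\mathcal{X})\big)^2\Big]}.$$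
   Context: Notation such as $Q(\mathcal{X})$ means the column vector obtained by applying $Q$ to each row of $\mathcal{X}$. The NTK parameterization and infinite-width limit are in the sense of Jacot et al.; in this limit the kernel $\hat{\Theta}^{(0)}$ converges to a deterministic kernel, identical for all ensemble members. The paper assumes $\gamma\|C\|<1$ (if $\gamma\|C\|\ge 1$ the procedure may diverge), so that the $\mathcal{O}(\gamma^t\|C\|^t)$ term vanishes as $t\to\infty$. *)

From HB Require Import structures.
From mathcomp Require Import all_boot all_order all_algebra.
From mathcomp Require Import all_classical all_reals all_analysis.
Set Implicit Arguments. Unset Strict Implicit. Unset Printing Implicit Defensive.
Import Order.TTheory GRing.Theory Num.Theory.
Local Open Scope ring_scope.

Section Defs.
Variables (S A : Type) (R : realType).

Record transition := Tr { tr_s : S; tr_a : A; tr_r : R; tr_s' : S }.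

Definition dataX n (D : 'I_n -> transition) : 'I_n -> S * A :=
  fun k => (tr_s (D k), tr_a (D k)).
Definition dataX' n (pi : S -> A) (D : 'I_n -> transition) : 'I_n -> S * A :=
  fun k => (tr_s' (D k), pi (tr_s' (D k))).
Definition dataR n (D : 'I_n -> transition) : 'cV[R]_n := \col_k tr_r (D k).

Definition evalv n (f : S * A -> R) (X : 'I_n -> S * A) : 'cV[R]_n :=
  \col_k f (X k).

Definition gram m n (Th : S * A -> S * A -> R) (X : 'I_m -> S * A)
  (Y : 'I_n -> S * A) : 'M[R]_(m, n) := \matrix_(i, j) Th (X i) (Y j).

Definition Cmat n (Th : S * A -> S * A -> R) (X X' : 'I_n -> S * A) : 'M[R]_n :=
  gram Th X' X *m invmx (gram Th X X).

(* Infinite-width NTK training to convergence (MSE, GD, small step) from the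
   initial network q0 on inputs X with targets y: the network becomes
   q0(x) + Theta(x, X) Theta(X, X)^{-1} (y - q0(X)). *)
Definition ntk_train n (Th : S * A -> S * A -> R) (X : 'I_n -> S * A)
  (q0 : S * A -> R) (y : 'cV[R]_n) : S * A -> R :=
  fun x => q0 x + ((\row_j Th x (X j)) *m invmx (gram Th X X) *m (y - evalv q0 X))
                    ord0 ord0.

Definition vnorm n (v : 'cV[R]_n) : R := \big[Num.max/0]_(k < n) `|v k ord0|.
Definition opnorm n (M : 'M[R]_n) : R :=
  \big[Num.max/0]_(i < n) \sum_(j < n) `|M i j|.

Definition geomsum n (g : R) (C : 'M[R]_n) (t : nat) : 'M[R]_n :=
  \sum_(k < t.+1) (g *: C) ^+ k.

Definition sqrtv n (v : 'cV[R]_n) : 'cV[R]_n := \col_k Num.sqrt (v k ord0).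

End Defs.

Section Prob.
Context {d : measure_display} {Z : measurableType d} {R : realType}.
Variable P : probability Z R.

Definition Ex (f : Z -> R) : R := Rintegral P setT f.
Definition Var (f : Z -> R) : R := Ex (fun z => (f z - Ex f) ^+ 2).

Variables (S A : Type).

Definition lcb (Q : Z -> S * A -> R) : S * A -> R :=
  fun x => Ex (fun z => Q z x) - Num.sqrt (Var (fun z => Q z x)).

Variables (n : nat) (Th : S * A -> S * A -> R) (pi : S -> A)
  (D : 'I_n -> transition S A R) (g : R) (Q0 : Z -> S * A -> R).

Fixpoint Qind (t : nat) : Z -> S * A -> R :=
  match t with
  | 0 => Q0
  | t'.+1 => fun z => ntk_train Th (dataX D) (Q0 z)
      (dataR D + g *: evalv (Qind t' z) (dataX' pi D))
  end.

Fixpoint Qshr (t : nat) : Z -> S * A -> R :=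
  match t with
  | 0 => Q0
  | t'.+1 => fun z => ntk_train Th (dataX D) (Q0 z)
      (dataR D + g *: evalv (lcb (Qshr t')) (dataX' pi D))
  end.

End Prob.

From HB Require Import structures.
From mathcomp Require Import all_boot all_order all_algebra.
From mathcomp Require Import all_classical all_reals all_analysis.
From mathcomp Require Import measurable_realfun ring lra.
Import Order.TTheory GRing.Theory Num.Theory.
Set Implicit Arguments. Unset Strict Implicit. Unset Printing Implicit Defensive.
Local Open Scope ring_scope.

(* One round of NTK training from the initialisation Q0 with targets y turns
   the values on X' into Q0(X') + C (y - Q0(X)), an affine function of y.
   With independent targets the member values on X' thus follow the affine
   recursion V <- (u + C R) + gamma C V with the centred noise
   u = Q0(X') - C Q0(X), so after t+1 rounds they equal
   (1 + ... + (gamma C)^t)(u + C R) + (gamma C)^(t+1) Q0(X'). Their mean is the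
   deterministic part, and by Minkowski's inequality in L2 their standard
   deviation is within the L2 norm of the tail, O((gamma |C|)^(t+1)), of that
   of (1 + ... + (gamma C)^t) u. With shared targets the only randomness of a
   round is u, so the LCB itself follows L <- (C R - sqrt E[u^2]) + gamma C L,
   whose closed form is exact up to the tail (gamma C)^(t+1) L_0. *)

Lemma quadratic_ge0_discriminant (R : realFieldType) (a b c : R) :
  (forall l, 0 <= a + 2 * l * b + l ^+ 2 * c) -> 0 <= c -> b ^+ 2 <= a * c.
Proof.
move=> quad_ge0 c_ge0; have [c0|c_neq0] := eqVneq c 0.
  rewrite c0 in quad_ge0 *; have [->|b_neq0] := eqVneq b 0; first by rewrite expr0n mulr0.
  have := quad_ge0 (- (a + 1) / (2 * b)).
  suff -> : a + 2 * (- (a + 1) / (2 * b)) * b + (- (a + 1) / (2 * b)) ^+ 2 * 0 = -1.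
    by rewrite ler0N1.
  by field.
have c_gt0 : 0 < c by rewrite lt_def c_neq0.
have := quad_ge0 (- b / c).
have -> : a + 2 * (- b / c) * b + (- b / c) ^+ 2 * c = (a * c - b ^+ 2) / c by field.
by rewrite pmulr_lge0 ?invr_gt0 // subr_ge0.
Qed.

Section SquareIntegrable.
Context {d : measure_display} {Z : measurableType d} {R : realType}.
Variable P : probability Z R.
Implicit Types (f g h : Z -> R) (c : R).

Local Notation integrableR f := (P.-integrable setT (EFin \o f)).

Definition sq_integrable f :=
  measurable_fun setT f /\ integrableR (fun z => f z ^+ 2).

Definition centered f := sq_integrable f /\ Ex P f = 0.

Lemma Ex_cst c : Ex P (fun=> c) = c.
Proof.
by rewrite /Ex Rintegral_cst //= (_ : P setT = 1%E) ?mulr1 // probability_setT.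
Qed.

Lemma ExD f g : integrableR f -> integrableR g ->
  Ex P (fun z => f z + g z) = Ex P f + Ex P g.
Proof. exact: RintegralD. Qed.

Lemma ExZ c f : integrableR f -> Ex P (fun z => c * f z) = c * Ex P f.
Proof. exact: RintegralZl. Qed.

Lemma Ex_ge0 f : (forall z, 0 <= f z) -> 0 <= Ex P f.
Proof. by move=> f_ge0; apply: Rintegral_ge0. Qed.

Lemma le_Ex f g : integrableR f -> integrableR g ->
  (forall z, f z <= g z) -> Ex P f <= Ex P g.
Proof. by move=> fi gi fg; apply: le_Rintegral. Qed.

Lemma integrableR_cst c : integrableR (fun=> c).
Proof. exact: finite_measure_integrable_cst. Qed.

Lemma integrableR_D f g : integrableR f -> integrableR g ->
  integrableR (fun z => f z + g z).
Proof. by move=> fi gi; apply: eq_integrable (integrableD _ fi gi). Qed.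

Lemma integrableR_Z c f : integrableR f -> integrableR (fun z => c * f z).
Proof. by move=> fi; apply: eq_integrable (integrableZl _ c fi). Qed.

Lemma integrableR_sum (I : Type) (r : seq I) (F : I -> Z -> R) :
  (forall i, integrableR (F i)) -> integrableR (fun z => \sum_(i <- r) F i z).
Proof.
move=> Fi; have := @integrable_sum _ _ _ P _ measurableT _ r xpredT _ (fun i _ => Fi i).
by apply: eq_integrable => // z _ /=; rewrite sumEFin.
Qed.

Lemma sq_integrable_integrable f : sq_integrable f -> integrableR f.
Proof.
move=> [mf f2i]; have : integrableR (fun z => 1 + f z ^+ 2).
  by apply: integrableR_D => //; exact: integrableR_cst.
apply: le_integrable => //; first exact/measurable_EFinP.
move=> z _ /=; rewrite lee_fin [X in _ <= X]ger0_norm ?addr_ge0 ?sqr_ge0 //.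
rewrite -real_normK ?num_real //; have := normr_ge0 (f z); nra.
Qed.

Lemma sq_integrable_mul f g : sq_integrable f -> sq_integrable g ->
  integrableR (fun z => f z * g z).
Proof.
move=> [mf f2i] [mg g2i]; have : integrableR (fun z => f z ^+ 2 + g z ^+ 2).
  exact: integrableR_D.
apply: le_integrable => //; first by apply/measurable_EFinP; exact: measurable_funM.
move=> z _ /=; rewrite lee_fin [X in _ <= X]ger0_norm ?addr_ge0 ?sqr_ge0 // normrM.
rewrite -(real_normK (num_real (f z))) -(real_normK (num_real (g z))).
have := normr_ge0 (f z); have := normr_ge0 (g z); nra.
Qed.

Lemma sq_integrableD f g : sq_integrable f -> sq_integrable g ->
  sq_integrable (fun z => f z + g z).
Proof.
move=> fL gL; have fgi := sq_integrable_mul fL gL.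
case: fL gL => [mf f2i] [mg g2i]; split; first exact: measurable_funD.
have : integrableR (fun z => f z ^+ 2 + (2 * (f z * g z) + g z ^+ 2)).
  by apply: integrableR_D => //; apply: integrableR_D => //; exact: integrableR_Z.
by apply: eq_integrable => // z _ /=; rewrite sqrrD; congr EFin; ring.
Qed.

Lemma sq_integrableZ c f : sq_integrable f -> sq_integrable (fun z => c * f z).
Proof.
move=> [mf f2i]; split; first exact: measurable_funM.
by apply: eq_integrable (integrableR_Z (c ^+ 2) f2i) => // z _ /=; rewrite exprMn.
Qed.

Lemma centered0 : centered (fun=> 0).
Proof.
by split; [split; [exact: measurable_cst | exact: integrableR_cst] | exact: Ex_cst].
Qed.

Lemma centeredD f g : centered f -> centered g -> centered (fun z => f z + g z).
Proof.
move=> [fL Ef] [gL Eg]; split; first exact: sq_integrableD.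
by rewrite ExD ?Ef ?Eg ?addr0 //; exact: sq_integrable_integrable.
Qed.

Lemma centeredZ c f : centered f -> centered (fun z => c * f z).
Proof.
move=> [fL Ef]; split; first exact: sq_integrableZ.
by rewrite ExZ ?Ef ?mulr0 //; exact: sq_integrable_integrable.
Qed.

Lemma centeredB f g : centered f -> centered g -> centered (fun z => f z - g z).
Proof.
move=> fc gc; have := centeredD fc (centeredZ (-1) gc).
by congr centered; apply: funext => z; rewrite mulN1r.
Qed.

Lemma centered_sum (I : Type) (r : seq I) (F : I -> Z -> R) :
  (forall i, centered (F i)) -> centered (fun z => \sum_(i <- r) F i z).
Proof.
move=> Fc; elim: r => [|i r IHr].
  by under [X in centered X]funext do rewrite big_nil; exact: centered0.
by under [X in centered X]funext do rewrite big_cons; exact: centeredD.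
Qed.

Lemma centered_mulmx m n (B : 'M[R]_(m, n)) (V : Z -> 'cV[R]_n) :
  (forall j, centered (fun z => V z j ord0)) ->
  forall i, centered (fun z => (B *m V z) i ord0).
Proof.
move=> Vc i; under [X in centered X]funext do rewrite mxE.
by apply: centered_sum => j; exact: centeredZ.
Qed.

Lemma Ex_shift_centered c f : centered f -> Ex P (fun z => c + f z) = c.
Proof.
move=> [fL Ef]; rewrite ExD ?Ex_cst ?Ef ?addr0 //.
  exact: integrableR_cst.
exact: sq_integrable_integrable.
Qed.

Lemma Var_shift_centered c f : centered f ->
  Var P (fun z => c + f z) = Ex P (fun z => f z ^+ 2).
Proof.
move=> fc; rewrite /Var Ex_shift_centered //.
by congr Ex; apply: funext => z; rewrite addrC addKr.
Qed.

Lemma lcb_shift_centered (S A : Type) (Q : Z -> S * A -> R) x c f :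
  centered f -> (forall z, Q z x = c + f z) ->
  lcb P Q x = c - Num.sqrt (Ex P (fun z => f z ^+ 2)).
Proof.
move=> fc Qx; rewrite /lcb (_ : (fun z => Q z x) = fun z => c + f z).
  by rewrite Ex_shift_centered // Var_shift_centered.
exact: funext.
Qed.

Lemma Ex_sqr_ge0 f : 0 <= Ex P (fun z => f z ^+ 2).
Proof. by apply: Ex_ge0 => z; exact: sqr_ge0. Qed.

Lemma Ex_sqrDZ f g c : sq_integrable f -> sq_integrable g ->
  Ex P (fun z => (f z + c * g z) ^+ 2) = Ex P (fun z => f z ^+ 2)
    + 2 * c * Ex P (fun z => f z * g z) + c ^+ 2 * Ex P (fun z => g z ^+ 2).
Proof.
move=> fL gL; have fgi := sq_integrable_mul fL gL.
case: fL gL => [_ f2i] [_ g2i].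
have -> : (fun z => (f z + c * g z) ^+ 2) =
    (fun z => f z ^+ 2 + ((2 * c) * (f z * g z) + c ^+ 2 * g z ^+ 2)).
  by apply: funext => z; ring.
rewrite ExD //; last by apply: integrableR_D; exact: integrableR_Z.
by rewrite ExD ?ExZ ?addrA //; exact: integrableR_Z.
Qed.

Lemma Ex_mul_le f g : sq_integrable f -> sq_integrable g ->
  Ex P (fun z => f z * g z) <=
  Num.sqrt (Ex P (fun z => f z ^+ 2)) * Num.sqrt (Ex P (fun z => g z ^+ 2)).
Proof.
move=> fL gL; rewrite -sqrtrM ?Ex_sqr_ge0 //.
have : Ex P (fun z => f z * g z) ^+ 2 <=
    Ex P (fun z => f z ^+ 2) * Ex P (fun z => g z ^+ 2).
  apply: quadratic_ge0_discriminant (Ex_sqr_ge0 g) => l.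
  by rewrite -Ex_sqrDZ //; exact: Ex_sqr_ge0.
move=> /ler_wsqrtr; rewrite sqrtr_sqr; exact: le_trans (ler_norm _).
Qed.

Lemma sqrt_Ex_sqrD_le f g : sq_integrable f -> sq_integrable g ->
  Num.sqrt (Ex P (fun z => (f z + g z) ^+ 2)) <=
  Num.sqrt (Ex P (fun z => f z ^+ 2)) + Num.sqrt (Ex P (fun z => g z ^+ 2)).
Proof.
move=> fL gL; have fg_le := Ex_mul_le fL gL.
have f_ge0 := sqrtr_ge0 (Ex P (fun z => f z ^+ 2)).
have g_ge0 := sqrtr_ge0 (Ex P (fun z => g z ^+ 2)).
rewrite -[_ + _ in X in _ <= X]ger0_norm ?addr_ge0 // -sqrtr_sqr ler_wsqrtr //.
under eq_fun do rewrite -[g _]mul1r.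
rewrite Ex_sqrDZ // sqrrD !sqr_sqrtr ?Ex_sqr_ge0 //.
rewrite expr1n mul1r mulr1 mulr2n; lra.
Qed.

Lemma sqrt_Ex_sqr_dist f g : sq_integrable f -> sq_integrable g ->
  `|Num.sqrt (Ex P (fun z => (f z + g z) ^+ 2)) - Num.sqrt (Ex P (fun z => f z ^+ 2))|
  <= Num.sqrt (Ex P (fun z => g z ^+ 2)).
Proof.
move=> fL gL; have Ng_L := sq_integrableZ (-1) gL.
have le1 := sqrt_Ex_sqrD_le fL gL.
move: (sqrt_Ex_sqrD_le (sq_integrableD fL gL) Ng_L).
have -> : (fun z => (f z + g z + -1 * g z) ^+ 2) = (fun z => f z ^+ 2).
  by apply: funext => z; rewrite mulN1r addrK.
have -> : (fun z => (-1 * g z) ^+ 2) = (fun z => g z ^+ 2).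
  by apply: funext => z; rewrite mulN1r sqrrN.
move=> le2; rewrite ler_norml; apply/andP; split; lra.
Qed.

Lemma sqrt_Ex_sqr_le f h a : 0 <= a -> sq_integrable f -> integrableR h ->
  (forall z, f z ^+ 2 <= a ^+ 2 * h z) ->
  Num.sqrt (Ex P (fun z => f z ^+ 2)) <= a * Num.sqrt (Ex P h).
Proof.
move=> a_ge0 [_ f2i] hi fh; rewrite -(ger0_norm a_ge0) -sqrtr_sqr -sqrtrM ?sqr_ge0 //.
by rewrite -ExZ // ler_wsqrtr // le_Ex //; exact: integrableR_Z.
Qed.

End SquareIntegrable.

Section SupNorm.
Variable R : realType.
Implicit Types (n : nat) (g : R).

Lemma entryD m n (M N : 'M[R]_(m, n)) i j : (M + N) i j = M i j + N i j.
Proof. by rewrite mxE. Qed.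

Lemma entryB m n (M N : 'M[R]_(m, n)) i j : (M - N) i j = M i j - N i j.
Proof. by rewrite !mxE. Qed.

Lemma vnorm_ge0 n (v : 'cV[R]_n) : 0 <= vnorm v.
Proof. by rewrite /vnorm; elim/big_ind: _ => // x y; rewrite le_max => ->. Qed.

Lemma vnorm_le n (v : 'cV[R]_n) b :
  0 <= b -> (forall k, `|v k ord0| <= b) -> vnorm v <= b.
Proof.
by move=> b_ge0 vb; rewrite /vnorm; elim/big_ind: _ => // x y; rewrite ge_max => ->.
Qed.

Lemma ler_vnorm n (v : 'cV[R]_n) k : `|v k ord0| <= vnorm v.
Proof. by rewrite /vnorm (bigD1 k) //= le_max lexx. Qed.

Lemma vnorm_sqr_le n (v : 'cV[R]_n) : vnorm v ^+ 2 <= \sum_j v j ord0 ^+ 2.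
Proof.
have sum_ge0 : 0 <= \sum_j v j ord0 ^+ 2 by apply: sumr_ge0 => j _; exact: sqr_ge0.
rewrite -(sqr_sqrtr sum_ge0) ler_sqr ?nnegrE ?vnorm_ge0 ?sqrtr_ge0 //.
apply: vnorm_le => [|k]; first exact: sqrtr_ge0.
rewrite -sqrtr_sqr ler_wsqrtr // (bigD1 k) //= lerDl.
by apply: sumr_ge0 => j _; exact: sqr_ge0.
Qed.

Lemma opnorm_ge0 n (M : 'M[R]_n) : 0 <= opnorm M.
Proof.
rewrite /opnorm; elim/big_ind: _ => // [x y|i _]; first by rewrite le_max => ->.
by apply: sumr_ge0 => j _.
Qed.

Lemma vnorm_mulmx n (M : 'M[R]_n) v : vnorm (M *m v) <= opnorm M * vnorm v.
Proof.
apply: vnorm_le => [|k]; first by rewrite mulr_ge0 ?opnorm_ge0 ?vnorm_ge0.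
rewrite mxE; apply: le_trans (ler_norm_sum _ _ _) _.
apply: le_trans (_ : \sum_j `|M k j| * vnorm v <= _).
  by apply: ler_sum => j _; rewrite normrM ler_wpM2l // ler_vnorm.
rewrite -mulr_suml ler_wpM2r ?vnorm_ge0 //.
by rewrite /opnorm [X in _ <= X](bigD1 k) //= le_max lexx.
Qed.

Lemma vnormZ_le n g (v : 'cV[R]_n) : 0 <= g -> vnorm (g *: v) <= g * vnorm v.
Proof.
move=> g_ge0; apply: vnorm_le => [|k]; first by rewrite mulr_ge0 ?vnorm_ge0.
by rewrite mxE normrM ger0_norm // ler_wpM2l // ler_vnorm.
Qed.

Lemma vnorm_exp_mulmx n g (C : 'M[R]_n) v m : 0 <= g ->
  vnorm ((g *: C) ^+ m *m v) <= (g * opnorm C) ^+ m * vnorm v.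
Proof.
move=> g_ge0; elim: m => [|m IHm]; first by rewrite expr0 mul1mx mul1r.
rewrite exprS -mulmxE -mulmxA -scalemxAl.
apply: le_trans (vnormZ_le _ g_ge0) _; rewrite exprS -!mulrA ler_wpM2l //.
apply: le_trans (vnorm_mulmx _ _) _.
by rewrite ler_wpM2l ?opnorm_ge0.
Qed.

Lemma sqr_exp_mulmx_le n g (C : 'M[R]_n) (v : 'cV[R]_n) m k : 0 <= g ->
  ((g *: C) ^+ m *m v) k ord0 ^+ 2 <= ((g * opnorm C) ^+ m) ^+ 2 * \sum_j v j ord0 ^+ 2.
Proof.
move=> g_ge0; have r_ge0 : 0 <= (g * opnorm C) ^+ m.
  by rewrite exprn_ge0 ?mulr_ge0 ?opnorm_ge0.
rewrite -real_normK ?num_real //.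
apply: le_trans (_ : ((g * opnorm C) ^+ m * vnorm v) ^+ 2 <= _).
  rewrite ler_sqr ?nnegrE ?mulr_ge0 ?vnorm_ge0 //.
  exact: le_trans (ler_vnorm _ k) (vnorm_exp_mulmx C v m g_ge0).
by rewrite exprMn ler_wpM2l ?sqr_ge0 ?vnorm_sqr_le.
Qed.

Lemma geomsumS n g (C : 'M[R]_n) t :
  geomsum g C t.+1 = 1%:M + (g *: C) *m geomsum g C t.
Proof.
rewrite /geomsum big_ord_recl expr0 mulmx_sumr; congr (_ + _).
by apply: eq_bigr => i _; rewrite lift0 exprS mulmxE.
Qed.

Lemma affine_iter n g (C : 'M[R]_n) (a : 'cV[R]_n) (V : nat -> 'cV[R]_n) :
  (forall t, V t.+1 = a + (g *: C) *m V t) ->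
  forall t, V t.+1 = geomsum g C t *m a + (g *: C) ^+ t.+1 *m V 0%N.
Proof.
move=> VS; elim=> [|t IHt]; first by rewrite VS /geomsum big_ord1 expr0 mul1mx expr1.
rewrite VS IHt geomsumS mulmxDl mul1mx mulmxDr !mulmxA addrA.
by rewrite [(g *: C) ^+ t.+2]exprS mulmxE.
Qed.

End SupNorm.

Lemma evalv_ntk_train (S A : Type) (R : realType) n (Th : S * A -> S * A -> R)
    (X X' : 'I_n -> S * A) (q0 : S * A -> R) (y : 'cV[R]_n) :
  evalv (ntk_train Th X q0 y) X' = evalv q0 X' + Cmat Th X X' *m (y - evalv q0 X).
Proof.
apply/matrixP => k j; rewrite (ord1 j) [LHS]mxE [RHS]mxE /ntk_train.
congr (_ + _); first by rewrite mxE.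
have -> : \row_j0 Th (X' k) (X j0) = row k (gram Th X' X).
  by apply/rowP => j0; rewrite !mxE.
by rewrite -!row_mul mxE.
Qed.

Section PessimisticEvaluation.
Context {d : measure_display} {Z : measurableType d} {R : realType}.
Variables (P : probability Z R) (S A : Type) (n : nat).
Variables (D : 'I_n -> transition S A R) (pi : S -> A) (gamma : R).
Variables (Th : S * A -> S * A -> R) (Q0 : Z -> S * A -> R).
Hypothesis gamma_ge0 : 0 <= gamma.
Hypothesis Q0_centered : forall x, centered P (fun z => Q0 z x).

Let X := dataX D.
Let X' := dataX' pi D.
Let Rv := dataR D.
Let C := Cmat Th X X'.
Let u z := evalv (Q0 z) X' - C *m evalv (Q0 z) X.
Let rho := gamma * opnorm C.

Lemma evalv_train_step (y : 'cV[R]_n) z :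
  evalv (ntk_train Th X (Q0 z) (Rv + gamma *: y)) X' =
  u z + C *m Rv + (gamma *: C) *m y.
Proof.
rewrite evalv_ntk_train mulmxBr mulmxDr -scalemxAl -scalemxAr /u.
by rewrite !addrA (addrAC _ (- _)) (addrAC _ (- _)).
Qed.

Lemma centered_evalv m (Y : 'I_m -> S * A) j :
  centered P (fun z => evalv (Q0 z) Y j ord0).
Proof. by under [X in centered _ X]funext do rewrite mxE. Qed.

Lemma centered_mulmx_evalv m (B : 'M[R]_(m, n)) (Y : 'I_n -> S * A) k :
  centered P (fun z => (B *m evalv (Q0 z) Y) k ord0).
Proof. by apply: centered_mulmx => j; exact: centered_evalv. Qed.

Lemma centered_u j : centered P (fun z => u z j ord0).
Proof.
under [X in centered _ X]funext do rewrite entryB.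
by apply: centeredB; [exact: centered_evalv | exact: centered_mulmx_evalv].
Qed.

Lemma centered_mulmx_u (B : 'M[R]_n) k : centered P (fun z => (B *m u z) k ord0).
Proof. by apply: centered_mulmx => j; exact: centered_u. Qed.

Lemma evalv_Qind t z :
  evalv (Qind Th pi D gamma Q0 t.+1 z) X' =
  geomsum gamma C t *m (u z + C *m Rv) + (gamma *: C) ^+ t.+1 *m evalv (Q0 z) X'.
Proof.
by apply: (affine_iter (V := fun s => evalv (Qind Th pi D gamma Q0 s z) X')) => s /=;
  rewrite evalv_train_step.
Qed.

Let Q0_sqnorm z := \sum_j Q0 z (X' j) ^+ 2.

Lemma sqrt_Ex_tail_le t k :
  Num.sqrt (Ex P (fun z => ((gamma *: C) ^+ t *m evalv (Q0 z) X') k ord0 ^+ 2))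
  <= rho ^+ t * Num.sqrt (Ex P Q0_sqnorm).
Proof.
apply: sqrt_Ex_sqr_le => [|||z].
- by rewrite exprn_ge0 ?mulr_ge0 ?opnorm_ge0.
- exact: (centered_mulmx_evalv _ _ k).1.
- by apply: integrableR_sum => j; case: (Q0_centered (X' j)) => -[].
- apply: le_trans (sqr_exp_mulmx_le _ _ _ _ gamma_ge0) _.
  by under eq_bigr do rewrite mxE.
Qed.

Lemma lcb_Qind_error t :
  vnorm (evalv (lcb P (Qind Th pi D gamma Q0 t.+1)) X'
         - (geomsum gamma C t *m C *m Rv
            - sqrtv (\col_k Ex P (fun z => ((geomsum gamma C t *m u z) k ord0) ^+ 2))))
  <= Num.sqrt (Ex P Q0_sqnorm) * rho ^+ t.+1.
Proof.
apply: vnorm_le => [|k].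
  by rewrite mulr_ge0 ?sqrtr_ge0 ?exprn_ge0 ?mulr_ge0 ?opnorm_ge0.
rewrite !entryB [evalv _ _ _ _]mxE [sqrtv _ _ _]mxE [in Num.sqrt _]mxE.
set c := (geomsum gamma C t *m C *m Rv) k ord0.
pose w z := (geomsum gamma C t *m u z) k ord0.
pose v z := ((gamma *: C) ^+ t.+1 *m evalv (Q0 z) X') k ord0.
have [w_sq _] : centered P w := centered_mulmx_u _ k.
have [v_sq _] : centered P v := centered_mulmx_evalv _ _ k.
rewrite (lcb_shift_centered (c := c) (f := fun z => w z + v z)); first last.
- move=> z; have := congr1 (fun V : 'cV[R]_n => V k ord0) (evalv_Qind t z).
  by rewrite mxE /= => ->; rewrite mulmxDr mulmxA !entryD addrAC addrC.
- exact: centeredD (centered_mulmx_u _ k) (centered_mulmx_evalv _ _ k).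
rewrite opprB addrC addrA subrK distrC mulrC.
exact: le_trans (sqrt_Ex_sqr_dist w_sq v_sq) (sqrt_Ex_tail_le _ _).
Qed.

Let sv := sqrtv (\col_k Ex P (fun z => (u z k ord0) ^+ 2)).
Let L s := evalv (lcb P (Qshr P Th pi D gamma Q0 s)) X'.

Lemma lcb_Qshr_step s : L s.+1 = (C *m Rv - sv) + (gamma *: C) *m L s.
Proof.
apply/matrixP => k j; rewrite (ord1 j) [LHS]mxE entryD entryB.
rewrite [sv _ _]mxE [in Num.sqrt _]mxE.
rewrite (lcb_shift_centered (c := (C *m Rv + (gamma *: C) *m L s) k ord0)
  (f := fun z => u z k ord0)).
- by rewrite entryD addrAC.
- exact: centered_u.
move=> z; have := congr1 (fun V : 'cV[R]_n => V k ord0) (evalv_train_step (L s) z).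
rewrite mxE => step; apply: etrans step _.
by rewrite -addrA [LHS]mxE addrC.
Qed.

Lemma lcb_Qshr_error t :
  vnorm (L t.+1 - (geomsum gamma C t *m C *m Rv - geomsum gamma C t *m sv))
  <= vnorm (L 0) * rho ^+ t.+1.
Proof.
rewrite (affine_iter lcb_Qshr_step) mulmxBr mulmxA addrC addKr mulrC.
exact: vnorm_exp_mulmx.
Qed.

End PessimisticEvaluation.

(* The error terms are in fact O((gamma |C|)^(t+1)). *)
Theorem theorem1 (d : measure_display) (Z : measurableType d) (R : realType)
  (P : probability Z R) (S A : Type) (n : nat)
  (D : 'I_n -> transition S A R) (pi : S -> A) (gamma : R)
  (Th : S * A -> S * A -> R) (Q0 : Z -> S * A -> R) :
  0 <= gamma -> gamma < 1 ->
  gram Th (dataX D) (dataX D) \in unitmx ->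
  gamma * opnorm (Cmat Th (dataX D) (dataX' pi D)) < 1 ->
  (forall x, measurable_fun setT (fun z => Q0 z x)) ->
  (forall x, P.-integrable setT (fun z => ((Q0 z x) ^+ 2)%:E)) ->
  (forall x, Ex P (fun z => Q0 z x) = 0) ->
  let X := dataX D in
  let X' := dataX' pi D in
  let Rv := dataR D in
  let C := Cmat Th X X' in
  let u := fun z => evalv (Q0 z) X' - C *m evalv (Q0 z) X in
  (exists K : R, forall t : nat,
     vnorm (evalv (lcb P (Qind Th pi D gamma Q0 t.+1)) X'
            - (geomsum gamma C t *m C *m Rv
               - sqrtv (\col_k Ex P (fun z => ((geomsum gamma C t *m u z) k ord0) ^+ 2))))
     <= K * (gamma * opnorm C) ^+ t)
  /\
  (exists K : R, forall t : nat,
     vnorm (evalv (lcb P (Qshr P Th pi D gamma Q0 t.+1)) X'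
            - (geomsum gamma C t *m C *m Rv
               - geomsum gamma C t *m sqrtv (\col_k Ex P (fun z => (u z k ord0) ^+ 2))))
     <= K * (gamma * opnorm C) ^+ t).
Proof.
move=> gamma_ge0 _ _ _ Q0_meas Q0_sq Q0_mean X X' Rv C u.
have Q0_centered x : centered P (fun z => Q0 z x).
  by split; [split; [exact: Q0_meas | exact: Q0_sq] | exact: Q0_mean].
split.
- exists (Num.sqrt (Ex P (fun z => \sum_j Q0 z (X' j) ^+ 2)) * (gamma * opnorm C)).
  by move=> t; rewrite -mulrA -exprS; exact: lcb_Qind_error.
- exists (vnorm (evalv (lcb P (Qshr P Th pi D gamma Q0 0)) X') * (gamma * opnorm C)).
  by move=> t; rewrite -mulrA -exprS; exact: lcb_Qshr_error.
Qed.
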